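(* Let $f\colon X\to X$ be a totally transitive homeomorphism of a metric space $X$ and let $\mu$ be a Borel probability measure on $X$ inner-distal with respect to $f$. If $X$ is $\mu$-Baire, then $\mu(\operatorname{Int}\operatorname{Per}(f))=0$.
   Context: $\mathcal{P}(x)=\{y\colon \inf_{n\in\mathbb{Z}} d(f^n(x),f^n(y))=0\}$; $\mu$ is inner-distal if $\mu(\operatorname{Int}\mathcal{P}(x))=0$ for all $x$. A set $F$ is $\mu$-nowhere-dense if $\mu(\operatorname{Int}\overline{F})=0$; $\mu$-meagre means a countable union of $\mu$-nowhere-dense sets; $X$ is $\mu$-Baire if $\mu(\operatorname{Int}A)=0$ for every $\mu$-meagre $A$. A homeomorphism is transitive if it has a dense orbit; $f$ is totally transitive if $f^n$ is transitive for every integer $n\ge1$. $\operatorname{Per}(f)=\{p\colon f^n(p)=p$ for some $n\ge1\}$. *)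

From HB Require Import structures.
From mathcomp Require Import all_boot all_order all_algebra.
From mathcomp Require Import all_classical all_reals all_analysis.
Set Implicit Arguments. Unset Strict Implicit. Unset Printing Implicit Defensive.
Import Order.TTheory GRing.Theory Num.Theory.
Local Open Scope classical_set_scope.
Local Open Scope ring_scope.

(* Metric spaces with a distinguished point (needed by the library's
   generated-sigma-algebra construction; harmless since a probability
   space is nonempty). *)
#[short(type="pmetricType")]
HB.structure Definition PointedMetric (K : numDomainType) :=
  { M of Metric K M & isPointed M }.

Notation borelT X := (g_sigma_algebraType (@open X)).

(* Integer iterates of a homeomorphism f with inverse g:
   f^n for n >= 0, g^(|n|) = f^n for n < 0. *)
Definition zit {X : Type} (f g : X -> X) (n : int) : X -> X :=
  match n with
  | Posz k => iter k f
  | Negz k => iter k.+1 g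
  end.

Definition homeo {X : topologicalType} (f g : X -> X) : Prop :=
  [/\ continuous f, continuous g, cancel f g & cancel g f].

Definition orbitZ {X : Type} (f g : X -> X) (x : X) : set X :=
  [set zit f g n x | n in [set: int]].

Definition transitive {X : topologicalType} (f g : X -> X) : Prop :=
  exists x, dense (orbitZ f g x).

Definition totally_transitive {X : topologicalType} (f g : X -> X) : Prop :=
  forall n : nat, (1 <= n)%N -> transitive (iter n f) (iter n g).

Definition Per {X : Type} (f : X -> X) : set X :=
  [set p | exists n : nat, (1 <= n)%N /\ iter n f p = p].

Definition proxcell {R : realType} {X : pmetricType R} (f g : X -> X) (x : X)
  : set X :=
  [set y | inf [set mdist (zit f g n x) (zit f g n y) | n in [set: int]] = 0].

Section mu_defs.
Context {R : realType} {X : pmetricType R}.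
Variable mu : set (borelT X) -> \bar R.

Definition inner_distal (f g : X -> X) : Prop :=
  forall x : X, mu (interior (proxcell f g x)) = 0%E.

Definition mu_nowhere_dense (F : set X) : Prop :=
  mu (interior (closure F)) = 0%E.

Definition mu_meagre (A : set X) : Prop :=
  exists F : nat -> set X,
    (forall n, mu_nowhere_dense (F n)) /\ A = \bigcup_n F n.

Definition mu_Baire : Prop :=
  forall A : set X, mu_meagre A -> mu (interior A) = 0%E.
End mu_defs.

From Pilot Require Import Defs.
From HB Require Import structures.
From mathcomp Require Import all_boot all_order all_algebra.
From mathcomp Require Import all_classical all_reals all_analysis.
Set Implicit Arguments. Unset Strict Implicit. Unset Printing Implicit Defensive.
Import Order.TTheory GRing.Theory Num.Theory.
Local Open Scope classical_set_scope.
Local Open Scope ring_scope.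

(* Per f is the countable union of the closed sets Fix (f^n), n >= 1.  If one
   of them were not mu-nowhere-dense it would have nonempty interior; a dense
   orbit of the transitive map f^n then meets this interior in a fixed point
   of f^n, so the whole orbit is a single fixed point and X, being Hausdorff,
   is a singleton.  But on a singleton the proximal cell is the whole space,
   of measure 1, contradicting inner distality.  Hence every Fix (f^n) is
   mu-nowhere-dense, Per f is mu-meagre, and mu-Baire concludes. *)

Lemma iter_can (T : Type) (f g : T -> T) n : cancel f g -> cancel (iter n f) (iter n g).
Proof. by move=> fK; elim: n => [|n IHn] x //; rewrite iterSr iterS fK IHn. Qed.

Section IntegerIterates.
Variables (T : Type) (f g : T -> T).
Hypotheses (fK : cancel f g) (gK : cancel g f).

Lemma zit_inj m : injective (zit f g m).
Proof.
by case: m => n /=; [exact: can_inj (iter_can n fK)|exact: can_inj (iter_can n.+1 gK)].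
Qed.

Lemma iter_invC n x : iter n g (f x) = f (iter n g x).
Proof. by elim: n => [|n IHn] //=; rewrite IHn fK gK. Qed.

Lemma zitC m x : zit f g m (f x) = f (zit f g m x).
Proof. by case: m => n; [rewrite /= -iterSr iterS|exact: (iter_invC n.+1)]. Qed.

Lemma zit_fixpoint m x : f x = x -> zit f g m x = x.
Proof.
move=> fx; have gx : g x = x by rewrite -{1}fx fK.
by case: m => n /=; rewrite iter_fix.
Qed.

Lemma fixpoint_zit m x : f (zit f g m x) = zit f g m x -> f x = x.
Proof. by rewrite -zitC => /zit_inj. Qed.

Lemma orbitZ_fixpoint x : f x = x -> orbitZ f g x = [set x].
Proof.
move=> fx; apply/seteqP; split => [_ [m _ <-]|_ ->]; first exact: zit_fixpoint.
by exists 0.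
Qed.

End IntegerIterates.

Lemma Per_bigcup (T : Type) (f : T -> T) :
  Per f = \bigcup_n [set p | iter n.+1 f p = p].
Proof.
apply/seteqP; split => [p [[|n] [_ fnp]] //|p [n _ fnp]]; first by exists n.
by exists n.+1.
Qed.

Lemma continuous_iter (X : topologicalType) (f : X -> X) n :
  continuous f -> continuous (iter n f).
Proof.
move=> fc; elim: n => [|n IHn] x /=; first exact: cvg_id.
exact: (continuous_comp (IHn x) (fc _)).
Qed.

Lemma closed_fixpoints (X : topologicalType) (h : X -> X) :
  hausdorff_space X -> continuous h -> closed [set p | h p = p].
Proof.
move=> hX hc; apply/closure_id/seteqP; split => [|p clp]; first exact: subset_closure.
apply: hX => A B Ahp Bp.
have Ap : nbhs p (h @^-1` A) := hc p A Ahp.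
have [q [/= hq [hqA Bq]]] := clp _ (filterI Ap Bp).
by exists q; split => //; rewrite -hq.
Qed.

Lemma dense_set1 (X : topologicalType) (x : X) :
  accessible_space X -> dense [set x] -> forall z, z = x.
Proof.
move=> aX xdense z; have [//|zx] := eqVneq z x.
have [A [oA /set_mem Az /set_mem nAx]] := aX _ _ zx.
have [w [Aw wx]] := xdense A (ex_intro _ z Az) oA.
by move: nAx; rewrite -wx => /(_ Aw).
Qed.

Lemma transitive_fixpoint_interior (X : topologicalType) (f g : X -> X) :
  hausdorff_space X -> cancel f g -> cancel g f -> Defs.transitive f g ->
  interior [set p | f p = p] !=set0 -> forall z w : X, z = w.
Proof.
move=> hX fK gK [x xdense] int_fix.
have [y [/interior_subset fy [m _ xy]]] := xdense _ int_fix (@open_interior _ _).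
have fx : f x = x by apply: (fixpoint_zit fK gK (m := m)); rewrite xy.
move: xdense; rewrite (orbitZ_fixpoint fK fx) => /(dense_set1 (hausdorff_accessible hX)).
by move=> allx z w; rewrite (allx z) (allx w).
Qed.

Lemma proxcell_refl (R : realType) (X : pmetricType R) (f g : X -> X) x :
  proxcell f g x x.
Proof.
rewrite /proxcell /=.
suff -> : [set mdist (zit f g n x) (zit f g n x) | n in [set: int]] = [set 0].
  exact: inf1.
apply/seteqP; split => [_ [n _ <-]|_ ->]; first exact: mdistxx.
by exists 0 => //; rewrite mdistxx.
Qed.

Lemma inner_distal_nontrivial (R : realType) (X : pmetricType R) (f g : X -> X)
    (mu : probability (borelT X) R) :
  inner_distal mu f g -> ~ (forall z w : X, z = w).
Proof.
move=> distal single; have := distal point.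
have -> : proxcell f g point = setT.
  by apply/seteqP; split => // y _; rewrite (single y point); exact: proxcell_refl.
by rewrite interiorT probability_setT => /eqP; rewrite onee_eq0.
Qed.

Theorem lemma3p8 (R : realType) (X : pmetricType R) (f g : X -> X)
  (mu : probability (borelT X) R) :
  homeo f g ->
  totally_transitive f g ->
  inner_distal mu f g ->
  mu_Baire mu ->
  mu (interior (Per f)) = 0%E.
Proof.
move=> [fc _ fK gK] tt distal baire; rewrite Per_bigcup; apply: baire.
exists (fun n => [set p | iter n.+1 f p = p]); split => // n.
have hX : hausdorff_space X := @metric_hausdorff _ X.
rewrite /mu_nowhere_dense -(closure_id _).1; last exact/closed_fixpoints/continuous_iter.
apply: contra_notP (inner_distal_nontrivial distal) => mu_int.
apply: (transitive_fixpoint_interior hX (iter_can _ fK) (iter_can _ gK) (tt n.+1 isT)).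
by apply/set0P/eqP => int0; apply: mu_int; rewrite int0 measure0.
Qed.
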